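(* Let $G=(V,E)$ be a directed graph whose edges are given on the external tape of a RATM-BIO as adjacency lists. Then the worst-case external access trace complexity of the DFS-Random Access algorithm (described in the context) executed on a RATM-BIO is $O(|V||E|)$.
   Context: A RATM-BIO (random access Turing machine with blocking IO) has a main memory tape with its address tape and an external memory tape with its address tape; a main head with random access on the main tape (jumping in one step to the cell whose index is on the main address tape when entering a random access state) and an external head that moves only one cell at a time on the external tape. Transitions are main memory computation transitions (main head moves, external head halts), external memory access transitions (external head moves one step, main head halts), and read/write transitions: on entering a read (write) state an external address is written, the main head halts and the external head moves step by step to the designated external cell; when reached, the content of that cell replaces (is replaced by) the content of the main memory cell under the main head, and main memory computation resumes. The external access trace complexity is the total number of moves of the external head. Semi-external setting: main memory has size $O(|V|)$; it holds an array $free[\cdot]$ indexed by vertices and a stack. DFS-Random Access algorithm: set $free[u]=1$ for all vertices $u$; for each vertex $u$: push $u$ on an empty stack; while the stack is nonempty, pop $v$; if $free[v]=1$, set $free[v]=0$ and, for each neighbor $w$ of $v$ (its adjacency list read from the external tape, in whatever order vertices are processed), if $free[w]=1$ push $w$. *)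

(* Abstract model of the DFS-Random Access algorithm on a
   RATM-BIO, tracking only the external head movement. *)
From mathcomp Require Import all_boot.
Set Implicit Arguments. Unset Strict Implicit. Unset Printing Implicit Defensive.

Section DFSRA.
Variables (V : finType) (adj : V -> seq V).

Definition nedges : nat := \sum_(v : V) size (adj v).

Definition dist (m n : nat) : nat := (m - n) + (n - m).

(* External tape: the adjacency lists stored consecutively, in the vertex
   order [ord] (cells indexed from 0). *)
Variable ord : seq V.
Definition ext_tape : seq V := flatten [seq adj u | u <- ord].

Definition list_start (v : V) : nat :=
  sumn [seq size (adj u) | u <- take (index v ord) ord].

Definition list_addrs (v : V) : seq nat := iota (list_start v) (size (adj v)).

(* Read transitions on the addresses [addrs], one after the other, starting
   with the external head on cell [pos]; each read moves the head step by
   step to the target cell.  Returns (final head position, number of head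
   moves, contents read).  [x0] is a dummy default for out-of-range cells. *)
Fixpoint read_cells (x0 : V) (pos : nat) (addrs : seq nat)
  : nat * nat * seq V :=
  match addrs with
  | [::] => (pos, 0, [::])
  | a :: rest =>
      let: (p, c, ws) := read_cells x0 a rest in
      (p, dist pos a + c, nth x0 ext_tape a :: ws)
  end.

Definition unmark (free : {ffun V -> bool}) (v : V) : {ffun V -> bool} :=
  [ffun x => if x == v then false else free x].

(* State: (free array, external head position, accumulated head moves).
   Inner while loop "while the stack is nonempty", with [fuel] bounding the
   number of pops.  The stack is a list whose head is the top. *)
Fixpoint dfs_loop (fuel : nat) (free : {ffun V -> bool}) (stack : seq V)
  (pos cost : nat) : {ffun V -> bool} * nat * nat :=
  match fuel with
  | 0 => (free, pos, cost)
  | f.+1 =>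
    match stack with
    | [::] => (free, pos, cost)
    | v :: st =>
      if free v then
        let free' := unmark free v in
        let: (pos', c, ns) := read_cells v pos (list_addrs v) in
        dfs_loop f free' (rev [seq w <- ns | free' w] ++ st) pos' (cost + c)
      else dfs_loop f free st pos cost
    end
  end.

Definition dfs_ra_state (outer : seq V) (fuel : nat) : {ffun V -> bool} * nat * nat :=
  foldl (fun s u => let: (free, pos, cost) := s in dfs_loop fuel free [:: u] pos cost)
        ([ffun => true], 0, 0) outer.

(* external access trace complexity: total number of external head moves *)
Definition dfs_ra_trace (outer : seq V) (fuel : nat) : nat :=
  (dfs_ra_state outer fuel).2.

End DFSRA.

From mathcomp Require Import all_boot.
From mathcomp Require Import zify.

Set Implicit Arguments.
Unset Strict Implicit.
Unset Printing Implicit Defensive.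

(* The external head never leaves the cells [0, |E|], so reading one
   adjacency list costs at most 2|E| head moves: at most |E| to reach the
   start of the list and fewer than |E| to scan it.  A list is read only when
   its vertex stops being free, which happens at most once per vertex.  Hence
   the potential  cost + 2|E| * #(free vertices)  never increases, and the
   trace is bounded by its initial value 2|E||V|. *)

Lemma foldl_potential (S A : Type) (f : S -> A -> S) (P : S -> Prop)
    (phi : S -> nat) :
  (forall s a, P s -> P (f s a) /\ phi (f s a) <= phi s) ->
  forall (xs : seq A) (s : S), P s -> P (foldl f s xs) /\ phi (foldl f s xs) <= phi s.
Proof.
move=> step; elim=> [|a xs IH] s Ps //=.
have [Pfs le_fs] := step s a Ps.
have [Pend le_end] := IH _ Pfs.
by split; last exact: leq_trans le_end le_fs.
Qed.

Section DFSTrace.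
Variables (V : finType) (adj : V -> seq V) (ord : seq V).
Let N := nedges adj.

Lemma read_cells_iota x0 pos s m :
  (read_cells adj ord x0 pos (iota s m.+1)).1 = (s + m, dist pos s + m).
Proof.
elim: m s pos => [|m IH] s pos; first by rewrite /= !addn0.
have -> : read_cells adj ord x0 pos (iota s m.+2) =
  let: (p, c, ws) := read_cells adj ord x0 s (iota s.+1 m.+1) in
  (p, dist pos s + c, nth x0 (ext_tape adj ord) s :: ws) by [].
have := IH s.+1 s; case: (read_cells _ _ _ _ _) => [[p c] ws] /= [-> ->].
by rewrite /dist; congr pair; lia.
Qed.

Hypothesis ord_perm : perm_eq ord (enum V).

Lemma sumn_sizes_ord : sumn [seq size (adj u) | u <- ord] = N.
Proof. by rewrite /N /nedges sumnE big_map (perm_big _ ord_perm) big_enum. Qed.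

Lemma list_start_size_le v : list_start adj ord v + size (adj v) <= N.
Proof.
have v_ord : v \in ord by rewrite (perm_mem ord_perm) mem_enum.
rewrite -sumn_sizes_ord /list_start.
rewrite -[in X in _ <= X](cat_take_drop (index v ord).+1 ord) map_cat sumn_cat.
rewrite (take_nth v) ?index_mem // nth_index // -cats1 map_cat sumn_cat /=.
lia.
Qed.

Lemma read_list_bound v pos : pos <= N ->
  let: (pos', cost) := (read_cells adj ord v pos (list_addrs adj ord v)).1 in
  pos' <= N /\ cost <= 2 * N.
Proof.
move=> pos_le; have := list_start_size_le v.
rewrite /list_addrs; case: (size (adj v)) => [|m] end_le /=; first by lia.
by rewrite read_cells_iota /dist; lia.
Qed.

Definition nfree (free : {ffun V -> bool}) : nat := #|[pred x | free x]|.

Lemma nfree_unmark (free : {ffun V -> bool}) v :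
  free v -> nfree free = (nfree (unmark free v)).+1.
Proof.
move=> free_v; rewrite /nfree (cardD1 v) inE free_v add1n; congr _.+1.
by apply: eq_card => x; rewrite !inE ffunE; case: eqP.
Qed.

Definition head_on_tape (st : {ffun V -> bool} * nat * nat) : Prop := st.1.2 <= N.

Definition potential (st : {ffun V -> bool} * nat * nat) : nat :=
  st.2 + 2 * N * nfree st.1.1.

Lemma dfs_loop_potential fuel free stack pos cost :
  pos <= N ->
  let st := dfs_loop adj ord fuel free stack pos cost in
  head_on_tape st /\ potential st <= potential (free, pos, cost).
Proof.
elim: fuel free stack pos cost => [|f IH] free [|v stack] pos cost pos_le //=.
case: ifP => free_v; last exact: IH.
have := read_list_bound v pos_le.
case: (read_cells _ _ _ _ _) => [[pos' c] ws] /= [pos'_le c_le].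
have [on_tape pot_le] := IH (unmark free v) (rev [seq w <- ws | unmark free v w] ++ stack)
  pos' (cost + c) pos'_le.
split=> //; apply: (leq_trans pot_le).
by rewrite /potential /= (nfree_unmark free_v); lia.
Qed.

End DFSTrace.

Theorem theorem7 :
  exists c : nat,
    forall (V : finType) (adj : V -> seq V),
      (forall v, uniq (adj v)) ->
      forall (ord outer : seq V),
        perm_eq ord (enum V) -> perm_eq outer (enum V) ->
        forall fuel : nat,
          dfs_ra_trace adj ord outer fuel <= c * #|V| * nedges adj.
Proof.
exists 2 => V adj _ ord outer ord_perm _ fuel.
pose step s u := let: (free, pos, cost) := s in dfs_loop adj ord fuel free [:: u] pos cost.
have step_potential s u : head_on_tape adj s ->
    head_on_tape adj (step s u) /\ potential adj (step s u) <= potential adj s.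
  by case: s => [[free pos] cost]; apply: dfs_loop_potential.
have start_on_tape : head_on_tape adj ([ffun => true], 0, 0) by [].
have [_ pot_le] := foldl_potential step_potential outer start_on_tape.
apply: leq_trans (leq_addr _ _) (leq_trans pot_le _).
by rewrite /potential /nfree /= add0n mulnAC leq_mul2r leq_mul2l max_card !orbT.
Qed.
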